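(* Let $\Phi:S_{m,n}\to S_{m',n'}$ be an affine isomorphism. Let $\omega_1\ne\omega_2$ be pure states in $K_m$ and $\sigma_1\neq\sigma_2$ pure states in $K_n$. Then there do not exist pure states $\rho_1,\rho_2,\rho_3\in\partial_eK_{m'}$ and $\tau_1,\tau_2,\tau_3\in\partial_eK_{n'}$ such that simultaneously $\Phi(\omega_1\otimes\sigma_1)=\rho_1\otimes\tau_1$, $\Phi(\omega_1\otimes\sigma_2)=\rho_1\otimes\tau_2$, $\Phi(\omega_2\otimes\sigma_1)=\rho_2\otimes\tau_3$, and $\Phi(\omega_2\otimes\sigma_2)=\rho_3\otimes\tau_3$.
   Context: $K_p$ denotes the state space of $\mathcal{B}(\mathbb{C}^p)$; $K_{m,n}$ the state space of $\mathcal{B}(\mathbb{C}^m\otimes\mathbb{C}^n)\cong\mathcal{B}(\mathbb{C}^m)\otimes\mathcal{B}(\mathbb{C}^n)$; $S_{m,n}\subseteq K_{m,n}$ the convex set of separable states (convex combinations of product states $\omega\otimes\sigma$, $\omega\in K_m$, $\sigma\in K_n$). $\partial_eC$ denotes the set of extreme points of a convex set $C$. An affine isomorphism is a bijection preserving convex combinations. *)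

From HB Require Import structures.
From mathcomp Require Import all_boot all_order all_algebra.
Set Implicit Arguments. Unset Strict Implicit. Unset Printing Implicit Defensive.
Import Order.TTheory GRing.Theory Num.Theory.
Local Open Scope ring_scope.

Section QDefs.
Variable C : numClosedFieldType.

Definition adjmx m n (A : 'M[C]_(m, n)) : 'M[C]_(n, m) :=
  \matrix_(i, j) (A j i)^*.

Definition psd p (A : 'M[C]_p) : Prop :=
  adjmx A = A /\ forall x : 'rV[C]_p, 0 <= (x *m A *m adjmx x) 0 0.

Definition is_state p (A : 'M[C]_p) : Prop := psd A /\ \tr A = 1.

Definition extreme_point (V : lmodType C) (X : V -> Prop) (x : V) : Prop :=
  X x /\ forall y z (t : C), X y -> X z -> 0 < t < 1 ->
    x = t *: y + (1 - t) *: z -> y = x /\ z = x.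

Definition pure_state p (A : 'M[C]_p) : Prop := extreme_point (@is_state p) A.

(* identification C^m (x) C^n = C^(m*n), compatible with mxvec_index *)
Definition tidx m n (k : 'I_(m * n)) : 'I_m * 'I_n :=
  enum_val (cast_ord (esym (mxvec_cast m n)) k).

Definition kron m n (A : 'M[C]_m) (B : 'M[C]_n) : 'M[C]_(m * n) :=
  \matrix_(k, l) (A (tidx k).1 (tidx l).1 * B (tidx k).2 (tidx l).2).

Definition separable m n (X : 'M[C]_(m * n)) : Prop :=
  exists (k : nat) (w : 'I_k -> C) (a : 'I_k -> 'M[C]_m) (b : 'I_k -> 'M[C]_n),
    (forall i, 0 <= w i) /\ \sum_i w i = 1 /\
    (forall i, is_state (a i) /\ is_state (b i)) /\
    X = \sum_i w i *: kron (a i) (b i).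

Definition affine_iso_sep m n m' n' (Phi : 'M[C]_(m * n) -> 'M[C]_(m' * n')) : Prop :=
  (forall X, separable X -> separable (Phi X)) /\
  (forall X Y, separable X -> separable Y -> Phi X = Phi Y -> X = Y) /\
  (forall Y, separable Y -> exists2 X, separable X & Phi X = Y) /\
  (forall X Y (t : C), separable X -> separable Y -> 0 <= t <= 1 ->
     Phi (t *: X + (1 - t) *: Y) = t *: Phi X + (1 - t) *: Phi Y).

End QDefs.

(* The proof uses one affine invariant of pairs (X, Y) of separable states:
   the pair "escapes" when the midpoint of [X, Y] is a proper convex
   combination t Z + (1 - t) Z' of separable states with Z off the segment.
   Affine isomorphisms preserve and reflect this property.  For distinct pure
   product states A (x) B and A' (x) B' we prove

        (A (x) B, A' (x) B') escapes  <->  A = A' or B = B'.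

   If B = B', the midpoint of the distinct pure states A, A' is a rank-two
   state from which a Schur complement splits a state off the segment.  If
   A <> A' and B <> B', positivity on product vectors forces every product
   state in a decomposition of the midpoint to be A (x) B or A' (x) B'.
   Transporting this characterisation through Phi on the pairs (w1s1, w2s1),
   (w1s1, w2s2) and (w1s2, w2s1) yields incompatible coincidence patterns
   among the r_i and t_j. *)
From HB Require Import structures.
From mathcomp Require Import all_boot all_order all_algebra ring.
From Stdlib Require Import Classical.
Set Implicit Arguments. Unset Strict Implicit. Unset Printing Implicit Defensive.
Import Order.TTheory GRing.Theory Num.Theory.
Local Open Scope ring_scope.

Section StateSpaces.
Variable C : numClosedFieldType.

Lemma adjmxK m n (A : 'M[C]_(m, n)) : adjmx (adjmx A) = A.
Proof. by apply/matrixP=> i j; rewrite !mxE conjCK. Qed.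

Lemma adjmxM m n p (A : 'M[C]_(m, n)) (B : 'M[C]_(n, p)) :
  adjmx (A *m B) = adjmx B *m adjmx A.
Proof.
have adjE k l (M : 'M[C]_(k, l)) : adjmx M = (map_mx Num.conj M)^T.
  by apply/matrixP=> i j; rewrite !mxE.
by rewrite !adjE map_mxM trmx_mul.
Qed.

Lemma adjmxD m n (A B : 'M[C]_(m, n)) : adjmx (A + B) = adjmx A + adjmx B.
Proof. by apply/matrixP=> i j; rewrite !mxE rmorphD. Qed.

Lemma adjmxZ m n a (A : 'M[C]_(m, n)) : adjmx (a *: A) = a^* *: adjmx A.
Proof. by apply/matrixP=> i j; rewrite !mxE rmorphM. Qed.

Lemma adjmxN m n (A : 'M[C]_(m, n)) : adjmx (- A) = - adjmx A.
Proof. by apply/matrixP=> i j; rewrite !mxE rmorphN. Qed.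

Definition sform n (A : 'M[C]_n) (p q : 'rV[C]_n) : C := (p *m A *m adjmx q) 0 0.
Definition ip n (p q : 'rV[C]_n) : C := (p *m adjmx q) 0 0.
Definition proj n (u : 'rV[C]_n) : 'M[C]_n := adjmx u *m u.

Lemma adjmx11 (M : 'M[C]_1) : (adjmx M) 0 0 = (M 0 0)^*.
Proof. by rewrite mxE. Qed.

Lemma ipC n (p q : 'rV[C]_n) : ip q p = (ip p q)^*.
Proof. by rewrite /ip -adjmx11 adjmxM adjmxK. Qed.

Lemma sformC n (A : 'M[C]_n) p q : adjmx A = A -> sform A q p = (sform A p q)^*.
Proof. by move=> hA; rewrite /sform -adjmx11 !adjmxM adjmxK hA mulmxA. Qed.

Lemma sformDl n (A : 'M[C]_n) p p' q : sform A (p + p') q = sform A p q + sform A p' q.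
Proof. by rewrite /sform !mulmxDl mxE. Qed.
Lemma sformZl n (A : 'M[C]_n) a p q : sform A (a *: p) q = a * sform A p q.
Proof. by rewrite /sform -!scalemxAl mxE. Qed.
Lemma sformDr n (A : 'M[C]_n) p q q' : sform A p (q + q') = sform A p q + sform A p q'.
Proof. by rewrite /sform adjmxD mulmxDr mxE. Qed.
Lemma sformZr n (A : 'M[C]_n) a p q : sform A p (a *: q) = a^* * sform A p q.
Proof. by rewrite /sform adjmxZ -scalemxAr mxE. Qed.
Lemma sformDm n (A B : 'M[C]_n) p q : sform (A + B) p q = sform A p q + sform B p q.
Proof. by rewrite /sform mulmxDr mulmxDl mxE. Qed.
Lemma sformZm n (A : 'M[C]_n) a p q : sform (a *: A) p q = a * sform A p q.
Proof. by rewrite /sform -scalemxAr -scalemxAl mxE. Qed.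
Lemma sformBm n (A B : 'M[C]_n) p q : sform (A - B) p q = sform A p q - sform B p q.
Proof.
by rewrite sformDm; congr (_ + _); rewrite /sform mulmxN mulNmx mxE.
Qed.
Lemma sform_sum n I (r : seq I) (F : I -> 'M[C]_n) p q :
  sform (\sum_(i <- r) F i) p q = \sum_(i <- r) sform (F i) p q.
Proof. by rewrite /sform mulmx_sumr mulmx_suml summxE. Qed.

Lemma sform_proj n (u : 'rV[C]_n) p q : sform (proj u) p q = ip p u * ip u q.
Proof.
rewrite /sform /proj /ip mulmxA -(mulmxA (p *m adjmx u)).
by rewrite [in LHS]mxE big_ord1.
Qed.

Lemma ip_mulmx n (A : 'M[C]_n) e p : adjmx A = A -> ip p (e *m A) = sform A p e.
Proof. by move=> hA; rewrite /ip /sform adjmxM hA mulmxA. Qed.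

Lemma ipDl n (p p' q : 'rV[C]_n) : ip (p + p') q = ip p q + ip p' q.
Proof. by rewrite /ip mulmxDl mxE. Qed.
Lemma ipZl n a (p q : 'rV[C]_n) : ip (a *: p) q = a * ip p q.
Proof. by rewrite /ip -scalemxAl mxE. Qed.
Lemma ipNl n (p q : 'rV[C]_n) : ip (- p) q = - ip p q.
Proof. by rewrite /ip mulNmx mxE. Qed.
Lemma ipDr n (p q q' : 'rV[C]_n) : ip p (q + q') = ip p q + ip p q'.
Proof. by rewrite /ip adjmxD mulmxDr mxE. Qed.
Lemma ipZr n a (p q : 'rV[C]_n) : ip p (a *: q) = a^* * ip p q.
Proof. by rewrite /ip adjmxZ -scalemxAr mxE. Qed.
Lemma ipNr n (p q : 'rV[C]_n) : ip p (- q) = - ip p q.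
Proof. by rewrite /ip adjmxN mulmxN mxE. Qed.

Lemma ipE n (p q : 'rV[C]_n) : ip p q = \sum_i p 0 i * (q 0 i)^*.
Proof. by rewrite /ip mxE; apply: eq_bigr => i _; rewrite mxE. Qed.

Lemma ip_ge0 n (p : 'rV[C]_n) : 0 <= ip p p.
Proof. by rewrite ipE sumr_ge0 // => i _; rewrite -normCK exprn_ge0. Qed.

Lemma ip_eq0 n (p : 'rV[C]_n) : ip p p = 0 -> p = 0.
Proof.
rewrite ipE => /eqP; rewrite psumr_eq0 => [/allP H|i _]; last by rewrite -normCK exprn_ge0.
apply/rowP=> i; rewrite mxE; have := H i (mem_index_enum _).
by rewrite -normCK expf_eq0 /= normr_eq0 => /eqP.
Qed.

Lemma tr_proj n (u : 'rV[C]_n) : \tr (proj u) = ip u u.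
Proof. by rewrite /proj mxtrace_mulC trace_mx11. Qed.

Lemma proj_scale n (c : C) (v : 'rV[C]_n) : proj (c *: v) = (c^* * c) *: proj v.
Proof. by rewrite /proj adjmxZ -scalemxAl -scalemxAr scalerA. Qed.

Lemma sform_comb2 n (A : 'M[C]_n) (a b : C) p q :
  sform A (a *: p + b *: q) (a *: p + b *: q) =
  a * a^* * sform A p p + a * b^* * sform A p q +
  b * a^* * sform A q p + b * b^* * sform A q q.
Proof. rewrite sformDl !sformDr !sformZl !sformZr; ring. Qed.

Lemma sform_delta n (A : 'M[C]_n) i j : sform A (delta_mx 0 i) (delta_mx 0 j) = A i j.
Proof.
rewrite /sform -rowE mxE (bigD1 j) //= big1 => [|k hk]; rewrite !mxE ?eqxx.
  by rewrite conjC1 mulr1 addr0.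
by rewrite (negbTE hk) andbF conjC0 mulr0.
Qed.

Lemma sform_inj n (A B : 'M[C]_n) : (forall p q, sform A p q = sform B p q) -> A = B.
Proof. by move=> h; apply/matrixP=> i j; rewrite -!sform_delta h. Qed.

Lemma psd_herm n (A : 'M[C]_n) : psd A -> adjmx A = A.
Proof. by case. Qed.

Lemma psd_ge0 n (A : 'M[C]_n) p : psd A -> 0 <= sform A p p.
Proof. by case=> _; apply. Qed.

Lemma psd_diag n (A : 'M[C]_n) i : psd A -> 0 <= A i i.
Proof. by move=> hA; rewrite -sform_delta psd_ge0. Qed.

Lemma psd_tr_ge0 n (A : 'M[C]_n) : psd A -> 0 <= \tr A.
Proof. by move=> hA; rewrite /mxtrace sumr_ge0 // => i _; apply: psd_diag. Qed.

Lemma psd_proj n (u : 'rV[C]_n) : psd (proj u).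
Proof.
split; first by rewrite /proj adjmxM adjmxK.
by move=> x; rewrite -/(sform _ x x) sform_proj ipC -normCKC exprn_ge0.
Qed.

Lemma psdD n (A B : 'M[C]_n) : psd A -> psd B -> psd (A + B).
Proof.
move=> hA hB; split; first by rewrite adjmxD !psd_herm.
by move=> x; rewrite -/(sform _ x x) sformDm addr_ge0 // psd_ge0.
Qed.

Lemma psdZ n (A : 'M[C]_n) a : 0 <= a -> psd A -> psd (a *: A).
Proof.
move=> ha hA; split; first by rewrite adjmxZ geC0_conj // psd_herm.
by move=> x; rewrite -/(sform _ x x) sformZm mulr_ge0 // psd_ge0.
Qed.

(* The radical of a psd form: an isotropic vector q is orthogonal to every p.
   Otherwise a suitable combination of p and q would have negative norm. *)
Lemma psd_radical n (A : 'M[C]_n) p q : psd A -> sform A q q = 0 -> sform A p q = 0.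
Proof.
move=> hA hq; apply/eqP; apply/negPn/negP => hb.
set a := sform A p p; set b := sform A p q.
have hnb : 0 < b * b^* by rewrite -normCK exprn_gt0 // normr_gt0.
have ca : a^* = a by rewrite -sformC // psd_herm.
have e1 : (2 * (b * b^*))^* = 2 * (b * b^*) by rewrite geC0_conj // mulr_ge0 // ltW.
have e2 : (- ((a + 1) * b))^* = - ((a + 1) * b^*)
  by rewrite rmorphN rmorphM rmorphD /= ca conjC1.
have e3 : sform A q p = b^* by rewrite (sformC _ _ (psd_herm hA)).
have := psd_ge0 (2 * (b * b^*) *: p + (- ((a + 1) * b)) *: q) hA.
rewrite sform_comb2 hq e3 e1 e2 -/a -/b.
have -> : 2 * (b * b^*) * (2 * (b * b^*)) * a + 2 * (b * b^*) * - ((a + 1) * b^*) * b +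
   - ((a + 1) * b) * (2 * (b * b^*)) * b^* + - ((a + 1) * b) * - ((a + 1) * b^*) * 0
   = - (4 * (b * b^*) * (b * b^*)) by ring.
rewrite oppr_ge0 => h.
have h4 : 0 < 4 * (b * b^*) * (b * b^*) by apply: mulr_gt0 => //; apply: mulr_gt0.
by have := lt_le_trans h4 h; rewrite ltxx.
Qed.

Lemma psd_CauchySchwarz n (A : 'M[C]_n) p q : psd A ->
  sform A p q * (sform A p q)^* <= sform A p p * sform A q q.
Proof.
move=> hA; set a := sform A p p; set b := sform A p q; set c := sform A q q.
have c0 : 0 <= c by apply: psd_ge0.
have [cz|cpos] := eqVneq c 0.
  by rewrite /b psd_radical // cz conjC0 !mulr0.
have cgt : 0 < c by rewrite lt_def cpos c0.
have := psd_ge0 (c *: p + (- b) *: q) hA.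
have e3 : sform A q p = b^* by rewrite (sformC _ _ (psd_herm hA)).
rewrite sform_comb2 e3 -/a -/b -/c.
have cc : c^* = c by rewrite -sformC // psd_herm.
rewrite !(rmorphM, rmorphN) /= cc.
have -> : c * c * a + c * - b^* * b + - b * c * b^* + - b * - b^* * c
   = c * (a * c - b * b^*) by ring.
by rewrite pmulr_rge0 // subr_ge0.
Qed.

Lemma psd_tr0 n (A : 'M[C]_n) : psd A -> \tr A = 0 -> A = 0.
Proof.
move=> hA /eqP; rewrite /mxtrace psumr_eq0 => [/allP H|i _]; last exact: psd_diag.
apply/matrixP=> i j; rewrite mxE -sform_delta psd_radical //.
by rewrite sform_delta; apply/eqP; apply: H; rewrite mem_index_enum.
Qed.

Section Schur.
Variables (n : nat) (A : 'M[C]_n) (e : 'rV[C]_n).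
Hypothesis hA : psd A.
Let c := sform A e e.
Hypothesis hc : 0 < c.

Definition schur : 'M[C]_n := c^-1 *: proj (e *m A).

Lemma sform_schur p q : sform schur p q = c^-1 * (sform A p e * sform A e q).
Proof. by rewrite /schur sformZm sform_proj /ip /sform adjmxM (psd_herm hA) mulmxA. Qed.

Lemma psd_schur : psd schur.
Proof. by apply: psdZ; [rewrite invr_ge0 ltW | apply: psd_proj]. Qed.

Lemma psd_schur_rest : psd (A - schur).
Proof.
split.
  by rewrite adjmxD adjmxN (psd_herm hA) (psd_herm psd_schur).
move=> x; rewrite -/(sform _ x x) sformBm sform_schur subr_ge0.
rewrite (sformC x e (psd_herm hA)).
rewrite -(ler_pM2l hc) mulrA mulfV ?mul1r; last by rewrite gt_eqF.
by rewrite [c * _]mulrC; apply: psd_CauchySchwarz.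
Qed.

Lemma schur_tr_gt0 : 0 < \tr schur.
Proof.
rewrite /schur mxtraceZ tr_proj mulr_gt0 ?invr_gt0 // lt_def ip_ge0 andbT.
apply/eqP=> /ip_eq0 h0; move: hc; rewrite /c /sform h0 mul0mx mxE.
by rewrite ltxx.
Qed.

Lemma schur_tr_le1 : \tr A = 1 -> \tr schur <= 1.
Proof.
move=> trA; rewrite -trA -subr_ge0 -raddfB.
exact: psd_tr_ge0 psd_schur_rest.
Qed.
End Schur.

Lemma state_decomp n (A B : 'M[C]_n) : is_state A -> psd B -> psd (A - B) ->
  0 < \tr B < 1 ->
  let t := \tr B in
  [/\ is_state (t^-1 *: B), is_state ((1 - t)^-1 *: (A - B)) &
      A = t *: (t^-1 *: B) + (1 - t) *: ((1 - t)^-1 *: (A - B))].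
Proof.
move=> [hA trA] hB hAB /andP[t0 t1] t.
have t0' : t != 0 by rewrite gt_eqF.
have t1' : 1 - t != 0 by rewrite subr_eq0 eq_sym lt_eqF.
split.
- split; first by apply: psdZ => //; rewrite invr_ge0 ltW.
  by rewrite mxtraceZ mulVf.
- split; first by apply: psdZ => //; rewrite invr_ge0 subr_ge0 ltW.
  by rewrite mxtraceZ raddfB /= trA mulVf.
by rewrite !scalerA !mulfV // !scale1r addrC subrK.
Qed.

(* Pure states are rank-one projectors onto unit vectors: otherwise the
   Schur complement at a nonzero diagonal entry splits A properly. *)
Lemma pure_rank1 n (A : 'M[C]_n) : pure_state A -> exists2 u, A = proj u & ip u u = 1.
Proof.
move=> [[hA trA] hext].
have [i hi] : exists i, A i i != 0.
  case: (pickP [pred i | A i i != 0]) => [i hi | h]; first by exists i.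
  move: trA; rewrite /mxtrace big1 => [/esym/eqP|j _]; first by rewrite oner_eq0.
  by apply/eqP; move: (h j) => /= /negbFE.
set e := delta_mx 0 i : 'rV[C]_n.
have hc : 0 < sform A e e by rewrite /e sform_delta lt_def hi psd_diag.
suff [s hs hAs] : exists2 s, 0 <= s & A = s *: proj (e *m A).
  exists (sqrtC s *: (e *m A)).
    by rewrite proj_scale geC0_conj ?sqrtC_ge0 // -expr2 sqrtCK.
  by rewrite -tr_proj proj_scale geC0_conj ?sqrtC_ge0 // -expr2 sqrtCK -hAs trA.
have [t1|tn1] := eqVneq (\tr (schur A e)) 1.
  exists (sform A e e)^-1; first by rewrite invr_ge0 ltW.
  apply/eqP; rewrite -subr_eq0 -/(schur A e); apply/eqP; apply: psd_tr0.
    exact: psd_schur_rest.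
  by rewrite raddfB /= t1 trA subrr.
have htt : 0 < \tr (schur A e) < 1.
  by rewrite schur_tr_gt0 //= lt_neqAle tn1 schur_tr_le1.
have [hN hN' hdec] := state_decomp (conj hA trA) (psd_schur hc) (psd_schur_rest hA hc) htt.
have [hNA _] := hext _ _ _ hN hN' htt hdec.
exists ((\tr (schur A e))^-1 * (sform A e e)^-1).
  by apply: mulr_ge0; rewrite invr_ge0 ltW // schur_tr_gt0.
by rewrite -[LHS]hNA /schur scalerA.
Qed.

(* Distinct rank-one projectors of unit vectors v, v' have overlap
   |<v|v'>|^2 < 1: equality would make v' a unimodular multiple of v. *)
Lemma proj_overlap_neq1 n (v v' : 'rV[C]_n) : ip v v = 1 -> ip v' v' = 1 ->
  proj v <> proj v' -> 1 - ip v v' * (ip v v')^* != 0.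
Proof.
move=> hv hv' hne; apply/negP; rewrite subr_eq0 => /eqP h1.
set d := ip v v' in h1.
have hw : ip (v' - d^* *: v) (v' - d^* *: v) = 0.
  rewrite !(ipDl, ipDr, ipNl, ipNr, ipZl, ipZr) hv hv' conjCK (ipC v v') -/d.
  have -> : 1 - d * d^* + (- (d^* * d) - d^* * - (d * 1)) = 1 - d * d^* by ring.
  by rewrite -h1 subrr.
have /eqP := ip_eq0 hw; rewrite subr_eq0 => /eqP hv'v.
by apply: hne; rewrite hv'v proj_scale conjCK -h1 scale1r.
Qed.

Lemma ip_add1_neq0 n (v v' : 'rV[C]_n) : ip v v = 1 -> ip v' v' = 1 ->
  proj v <> proj v' -> 1 + ip v v' != 0.
Proof.
move=> hv hv' hne; have := proj_overlap_neq1 hv hv' hne.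
apply: contraNN; rewrite addrC addr_eq0 => /eqP ->.
by rewrite conjCN1 mulrNN mulr1 subrr.
Qed.

Lemma half_compl : 1 - 2^-1 = 2^-1 :> C.
Proof. by rewrite {1}(splitr 1) mul1r addrK. Qed.

Lemma half_ge0 : 0 <= 2^-1 :> C.
Proof. by rewrite invr_ge0 ler0n. Qed.

Lemma half_in01 : (0 : C) <= 2^-1 <= (1 : C).
Proof. by rewrite half_ge0 /= -subr_ge0 half_compl half_ge0. Qed.

(* Let M be the midpoint of the distinct pure states |v><v|, |v'><v'|.  Any
   nonzero multiple of the rank-one part |(v+v')M><(v+v')M| lies off the line
   through them: evaluate the form at the vectors p = v' - <v'|v> v and
   q = v - <v|v'> v', which kill v resp. v'. *)
Lemma midpoint_part_off_line n (v v' : 'rV[C]_n) (k s : C) :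
  ip v v = 1 -> ip v' v' = 1 -> proj v <> proj v' -> k != 0 ->
  k *: proj ((v + v') *m (2^-1 *: proj v + (1 - 2^-1) *: proj v'))
  <> s *: proj v + (1 - s) *: proj v'.
Proof.
move=> hv hv' hne hk H.
have hnp := proj_overlap_neq1 hv hv' hne.
have hd1 := ip_add1_neq0 hv hv' hne.
set d := ip v v' in hnp hd1.
have hd' : ip v' v = d^* by rewrite (ipC v v').
set M := 2^-1 *: proj v + (1 - 2^-1) *: proj v' in H.
have hM : adjmx M = M.
  by apply: psd_herm; apply: psdD; apply: psdZ;
    rewrite ?half_compl ?half_ge0 //; apply: psd_proj.
set e := v + v' in H.
set p := v' - d^* *: v; set q := v - d *: v'.
have dpv : ip p v = 0 by rewrite /p ipDl ipNl ipZl hv hd' mulr1 subrr.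
have dpv' : ip p v' = 1 - d^* * d by rewrite /p ipDl ipNl ipZl hv'.
have dqv : ip q v = 1 - d * d^* by rewrite /q ipDl ipNl ipZl hv hd'.
have dqv' : ip q v' = 0 by rewrite /q ipDl ipNl ipZl hv' mulr1 subrr.
have dve : ip v e = 1 + d by rewrite /e ipDr hv.
have dv'e : ip v' e = d^* + 1 by rewrite /e ipDr hv' hd'.
have hd2 : d^* + 1 != 0 by rewrite addrC -conjC1 -rmorphD conjC_eq0.
have hd3 : 1 - d^* * d != 0 by rewrite mulrC.
have := congr1 (fun X => sform X p q) H.
rewrite /= sformZm sform_proj (ipC q) !ip_mulmx // !sformDm !sformZm !sform_proj.
rewrite dpv dpv' dqv dqv' (ipC q v) (ipC q v') dqv dqv' dve dv'e half_compl.
rewrite !conjC0 !mul0r !mulr0 !addr0 add0r.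
by apply/eqP; rewrite !mulf_neq0 // ?conjC_eq0 ?mulf_neq0 ?invr_eq0 ?pnatr_eq0.
Qed.

Lemma pure_midpoint_split n (v v' : 'rV[C]_n) : ip v v = 1 -> ip v' v' = 1 ->
  proj v <> proj v' ->
  exists N N' (t : C), [/\ is_state N, is_state N', 0 < t < 1,
    2^-1 *: proj v + (1 - 2^-1) *: proj v' = t *: N + (1 - t) *: N' &
    forall s, N <> s *: proj v + (1 - s) *: proj v'].
Proof.
move=> hv hv' hne.
set M := 2^-1 *: proj v + (1 - 2^-1) *: proj v'.
have hMp : psd M.
  by apply: psdD; apply: psdZ; rewrite ?half_compl ?half_ge0 //; apply: psd_proj.
have hMt : \tr M = 1.
  by rewrite mxtraceD !mxtraceZ !tr_proj hv hv' half_compl !mulr1 {3}(splitr 1) mul1r.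
set e := v + v'.
have hc : 0 < sform M e e.
  rewrite sformDm !sformZm !sform_proj half_compl (ipC e v) (ipC e v').
  have h1 : ip e v != 0.
    by rewrite /e ipDl hv (ipC v v') -conjC_eq0 rmorphD /= conjCK conjC1 ip_add1_neq0.
  have h2 : ip e v' != 0 by rewrite /e ipDl hv' addrC ip_add1_neq0.
  by rewrite addr_gt0 // mulr_gt0 ?invr_gt0 ?ltr0n // -normCK exprn_gt0 // normr_gt0.
have tn1 : \tr (schur M e) != 1.
  apply/eqP => t1.
  have h0 : M - schur M e = 0.
    by apply: psd_tr0; [exact: psd_schur_rest | rewrite raddfB /= t1 hMt subrr].
  apply: (@midpoint_part_off_line n v v' (sform M e e)^-1 2^-1 hv hv' hne).
    by rewrite invr_eq0 gt_eqF.
  by apply/esym/eqP; rewrite -subr_eq0 -/M; apply/eqP.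
have htt : 0 < \tr (schur M e) < 1.
  by rewrite schur_tr_gt0 //= lt_neqAle tn1 schur_tr_le1.
have [hN hN' hdec] := state_decomp (conj hMp hMt) (psd_schur hc) (psd_schur_rest hMp hc) htt.
eexists; eexists; exists (\tr (schur M e)); split; [exact: hN | exact: hN' | done | done |].
move=> s; rewrite /schur scalerA.
apply: midpoint_part_off_line => //.
by apply: mulf_neq0; rewrite invr_eq0 gt_eqF // schur_tr_gt0.
Qed.

Definition tinv m n (ij : 'I_m * 'I_n) : 'I_(m * n) :=
  cast_ord (mxvec_cast m n) (enum_rank ij).

Lemma tidx_tinv m n ij : tidx (tinv ij) = ij :> 'I_m * 'I_n.
Proof. by rewrite /tidx /tinv cast_ordK enum_rankK. Qed.

Lemma tinv_tidx m n k : tinv (tidx k) = k :> 'I_(m * n).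
Proof. by rewrite /tidx /tinv enum_valK cast_ordKV. Qed.

Lemma kronE m n (A : 'M[C]_m) (B : 'M[C]_n) i j k l :
  kron A B (tinv (i, k)) (tinv (j, l)) = A i j * B k l.
Proof. by rewrite mxE !tidx_tinv. Qed.

Lemma sum_tidx m n (F : 'I_m -> 'I_n -> C) :
  \sum_(k : 'I_(m * n)) F (tidx k).1 (tidx k).2 = \sum_i \sum_j F i j.
Proof.
rewrite (reindex (@tinv m n)) /=; last first.
  by exists (@tidx m n) => x _; [rewrite tidx_tinv | rewrite tinv_tidx].
by rewrite pair_big /=; apply: eq_bigr => [[i j]] _; rewrite tidx_tinv.
Qed.

Definition tvec m n (g : 'rV[C]_m) (h : 'rV[C]_n) : 'rV[C]_(m * n) :=
  \row_k (g 0 (tidx k).1 * h 0 (tidx k).2).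

Lemma sformE n (M : 'M[C]_n) p q :
  sform M p q = \sum_i \sum_j p 0 i * M i j * (q 0 j)^*.
Proof.
rewrite /sform mxE; under eq_bigr => j _ do rewrite !mxE big_distrl /=.
by rewrite exchange_big /=; apply: eq_bigr => i _; apply: eq_bigr.
Qed.

Lemma sform_kron m n (A : 'M[C]_m) (B : 'M[C]_n) g h g' h' :
  sform (kron A B) (tvec g h) (tvec g' h') = sform A g g' * sform B h h'.
Proof.
rewrite sformE.
under eq_bigr => k _ do under eq_bigr => l _ do rewrite !mxE.
rewrite (sum_tidx (fun i k => \sum_l (g 0 i * h 0 k * (A i (tidx l).1 * B k (tidx l).2) *
   (g' 0 (tidx l).1 * h' 0 (tidx l).2)^*))).
under eq_bigr => i _ do under eq_bigr => k _ do rewrite (sum_tidx (fun j l =>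
   g 0 i * h 0 k * (A i j * B k l) * (g' 0 j * h' 0 l)^*)).
rewrite !sformE big_distrl /=; apply: eq_bigr => i _.
rewrite big_distrl /= exchange_big /=; apply: eq_bigr => j _.
rewrite mulr_sumr; apply: eq_bigr => k _.
rewrite mulr_sumr; apply: eq_bigr => l _.
rewrite rmorphM /=; ring.
Qed.

Lemma kronZl m n (A : 'M[C]_m) (B : 'M[C]_n) a : kron (a *: A) B = a *: kron A B.
Proof. by apply/matrixP=> i j; rewrite !mxE mulrA. Qed.
Lemma kronDl m n (A A' : 'M[C]_m) (B : 'M[C]_n) : kron (A + A') B = kron A B + kron A' B.
Proof. by apply/matrixP=> i j; rewrite !mxE mulrDl. Qed.
Lemma kronZr m n (A : 'M[C]_m) (B : 'M[C]_n) a : kron A (a *: B) = a *: kron A B.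
Proof. by apply/matrixP=> i j; rewrite !mxE mulrCA. Qed.
Lemma kronDr m n (A : 'M[C]_m) (B B' : 'M[C]_n) : kron A (B + B') = kron A B + kron A B'.
Proof. by apply/matrixP=> i j; rewrite !mxE mulrDr. Qed.

(* A Kronecker product determines each factor of trace one: take the
   partial trace over the other factor. *)
Lemma kron_injl m n (A A' : 'M[C]_m) (B B' : 'M[C]_n) :
  \tr B = 1 -> \tr B' = 1 -> kron A B = kron A' B' -> A = A'.
Proof.
move=> tB tB' h; apply/matrixP=> i j.
rewrite -[A i j]mulr1 -[A' i j]mulr1 -{1}tB -tB' /mxtrace !mulr_sumr.
by apply: eq_bigr => k _; rewrite -!kronE h.
Qed.

Lemma kron_injr m n (A A' : 'M[C]_m) (B B' : 'M[C]_n) :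
  \tr A = 1 -> \tr A' = 1 -> kron A B = kron A' B' -> B = B'.
Proof.
move=> tA tA' h; apply/matrixP=> i j.
rewrite -[B i j]mul1r -[B' i j]mul1r -{1}tA -tA' /mxtrace !mulr_suml.
by apply: eq_bigr => k _; rewrite -!kronE h.
Qed.

Lemma separable_kron m n (A : 'M[C]_m) (B : 'M[C]_n) :
  is_state A -> is_state B -> separable (kron A B).
Proof.
move=> hA hB; exists 1, (fun=> 1), (fun=> A), (fun=> B).
by do ![split=> //]; rewrite big_ord1 // scale1r.
Qed.

Definition catf (T : Type) k1 k2 (f1 : 'I_k1 -> T) (f2 : 'I_k2 -> T)
    (i : 'I_(k1 + k2)) : T :=
  match split i with inl j => f1 j | inr j => f2 j end.

Lemma catf_l T k1 k2 (f1 : 'I_k1 -> T) (f2 : 'I_k2 -> T) j :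
  catf f1 f2 (lshift k2 j) = f1 j.
Proof. by rewrite /catf (unsplitK (inl _ j)). Qed.

Lemma catf_r T k1 k2 (f1 : 'I_k1 -> T) (f2 : 'I_k2 -> T) j :
  catf f1 f2 (rshift k1 j) = f2 j.
Proof. by rewrite /catf (unsplitK (inr _ j)). Qed.

Lemma separable_conv m n (X Y : 'M[C]_(m * n)) (t : C) :
  separable X -> separable Y -> 0 <= t <= 1 -> separable (t *: X + (1 - t) *: Y).
Proof.
move=> [k1 [w1 [a1 [b1 [hw1 [s1 [hab1 ->]]]]]]] [k2 [w2 [a2 [b2 [hw2 [s2 [hab2 ->]]]]]]].
move=> /andP[t0 t1].
exists (k1 + k2)%N, (catf (fun j => t * w1 j) (fun j => (1 - t) * w2 j)),
  (catf a1 a2), (catf b1 b2).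
split; first by move=> i; rewrite /catf; case: (split i) => j;
  apply: mulr_ge0; rewrite ?subr_ge0.
split.
  rewrite big_split_ord /=.
  under eq_bigr => j _ do rewrite catf_l.
  under [X in _ + X]eq_bigr => j _ do rewrite catf_r.
  by rewrite -!mulr_sumr s1 s2 !mulr1 subrKC.
split; first by move=> i; rewrite /catf; case: (split i).
rewrite big_split_ord /= !scaler_sumr; congr (_ + _); apply: eq_bigr => j _.
  by rewrite !catf_l scalerA.
by rewrite !catf_r scalerA.
Qed.

Lemma state_supported_proj n (A : 'M[C]_n) (u : 'rV[C]_n) : is_state A -> ip u u = 1 ->
  (forall g, ip g u = 0 -> sform A g g = 0) -> A = proj u.
Proof.
move=> [hA trA] hu H.
have hperp p : ip (p - ip p u *: u) u = 0 by rewrite ipDl ipNl ipZl hu mulr1 subrr.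
have radr p x : sform A x (p - ip p u *: u) = 0 by apply: psd_radical => //; apply: H.
have radl p x : sform A (p - ip p u *: u) x = 0.
  by rewrite (sformC _ _ (psd_herm hA)) radr conjC0.
have hAu : A = sform A u u *: proj u.
  apply: sform_inj => p q; rewrite sformZm sform_proj (ipC q u).
  rewrite -{1}(subrK (ip p u *: u) p) -{1}(subrK (ip q u *: u) q).
  rewrite sformDl radl add0r sformDr sformZl radr mulr0 add0r sformZl sformZr; ring.
by move: trA; rewrite hAu mxtraceZ tr_proj hu mulr1 => ->; rewrite scale1r.
Qed.

Lemma product_vanishing_proj m n (A : 'M[C]_m) (B : 'M[C]_n) x y :
  is_state A -> is_state B -> ip x x = 1 -> ip y y = 1 ->
  (forall g h, ip g x = 0 -> ip h y = 0 -> sform A g g * sform B h h = 0) ->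
  A = proj x \/ B = proj y.
Proof.
move=> hA hB hx hy H.
case: (classic (forall g, ip g x = 0 -> sform A g g = 0)) => HA.
  by left; apply: state_supported_proj.
right; apply: state_supported_proj => // h hh.
have [g Hg] := not_all_ex_not _ _ HA; have [hg hng] := imply_to_and _ _ Hg.
have /eqP := H g h hg hh; rewrite mulf_eq0 => /orP [/eqP hA0|/eqP //].
by case: hng.
Qed.

Lemma separable_tvec_ge0 m n (Z : 'M[C]_(m * n)) g h :
  separable Z -> 0 <= sform Z (tvec g h) (tvec g h).
Proof.
move=> [k [w [a [b [hw [_ [hab ->]]]]]]].
rewrite sform_sum sumr_ge0 // => i _; have [[ha _] [hb _]] := hab i.
by rewrite sformZm sform_kron !mulr_ge0 // psd_ge0.
Qed.

Lemma decomp_term_vanishes m n (M Z' : 'M[C]_(m * n)) (t : C) k (w : 'I_k -> C)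
    (a : 'I_k -> 'M[C]_m) (b : 'I_k -> 'M[C]_n) i g h :
  separable Z' -> 0 < t < 1 -> (forall j, 0 <= w j) ->
  (forall j, is_state (a j) /\ is_state (b j)) ->
  M = t *: (\sum_j w j *: kron (a j) (b j)) + (1 - t) *: Z' -> 0 < w i ->
  sform M (tvec g h) (tvec g h) = 0 -> sform (a i) g g * sform (b i) h h = 0.
Proof.
move=> hZ' /andP[t0 t1] hw hab -> wi.
have term_ge0 j : 0 <= sform (w j *: kron (a j) (b j)) (tvec g h) (tvec g h).
  have [[ha _] [hb _]] := hab j.
  by rewrite sformZm sform_kron !mulr_ge0 // psd_ge0.
rewrite sformDm !sformZm sform_sum => /eqP; rewrite paddr_eq0; first last.
- by apply: mulr_ge0; [rewrite subr_ge0 ltW | exact: separable_tvec_ge0].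
- by apply: mulr_ge0; [exact: ltW | exact: sumr_ge0].
case/andP; rewrite mulf_eq0 gt_eqF //= psumr_eq0 // => /allP/(_ i (mem_index_enum _)).
by rewrite sformZm sform_kron mulf_eq0 gt_eqF //= => /eqP.
Qed.

Section ProductFace.
Variables (m n : nat) (u u' : 'rV[C]_m) (v v' : 'rV[C]_n).
Hypotheses (hu : ip u u = 1) (hu' : ip u' u' = 1) (hv : ip v v = 1) (hv' : ip v' v' = 1).
Hypotheses (nu : proj u <> proj u') (nv : proj v <> proj v').

Let X := kron (proj u) (proj v).
Let Y := kron (proj u') (proj v').

Let sform_mid g h : sform (2^-1 *: X + (1 - 2^-1) *: Y) (tvec g h) (tvec g h) =
  2^-1 * ((ip g u * ip u g) * (ip h v * ip v h)) +
  (1 - 2^-1) * ((ip g u' * ip u' g) * (ip h v' * ip v' h)).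
Proof. by rewrite sformDm !sformZm !sform_kron !sform_proj. Qed.

(* Every product state of positive weight in a decomposition of the midpoint
   of X and Y is X or Y: testing against u^perp (x) v'^perp and
   u'^perp (x) v^perp leaves only these two combinations. *)
Lemma midpoint_product_terms (Z' : 'M[C]_(m * n)) (t : C) k (w : 'I_k -> C)
    (a : 'I_k -> 'M[C]_m) (b : 'I_k -> 'M[C]_n) :
  separable Z' -> 0 < t < 1 -> (forall j, 0 <= w j) ->
  (forall j, is_state (a j) /\ is_state (b j)) ->
  2^-1 *: X + (1 - 2^-1) *: Y = t *: (\sum_j w j *: kron (a j) (b j)) + (1 - t) *: Z' ->
  forall i, 0 < w i -> (a i = proj u /\ b i = proj v) \/ (a i = proj u' /\ b i = proj v').
Proof.
move=> hZ' ht hw hab hmid i wi; have [ha hb] := hab i.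
have vanish g h : sform (2^-1 *: X + (1 - 2^-1) *: Y) (tvec g h) (tvec g h) = 0 ->
    sform (a i) g g * sform (b i) h h = 0.
  exact: (decomp_term_vanishes hZ' ht hw hab hmid wi).
have [e1|e1] : a i = proj u \/ b i = proj v'.
  apply: product_vanishing_proj => // g h hg hh; apply: vanish.
  by rewrite sform_mid hg (ipC g u) hg (ipC h v') hh conjC0 !(mulr0, mul0r) addr0.
all: have [e2|e2] : a i = proj u' \/ b i = proj v.
all: try (apply: product_vanishing_proj => // g h hg hh; apply: vanish;
  by rewrite sform_mid hg (ipC g u') hg (ipC h v) hh conjC0 !(mulr0, mul0r) addr0).
- by case: nu; rewrite -e1 -e2.
- by left.
- by right.
- by case: nv; rewrite -e1 -e2.
Qed.

Lemma product_segment_face (Z Z' : 'M[C]_(m * n)) (t : C) :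
  separable Z -> separable Z' -> 0 < t < 1 ->
  2^-1 *: X + (1 - 2^-1) *: Y = t *: Z + (1 - t) *: Z' ->
  exists2 s, 0 <= s <= 1 & Z = s *: X + (1 - s) *: Y.
Proof.
move=> [k [w [a [b [hw [hw1 [hab hZe]]]]]]] hZ' ht hmid.
rewrite hZe in hmid.
have terms := midpoint_product_terms hZ' ht hw hab hmid.
have nu' : (proj u' == proj u) = false by apply/eqP => h; apply: nu.
have hsplit i : w i *: kron (a i) (b i) =
    (if a i == proj u then w i else 0) *: X + (if a i == proj u then 0 else w i) *: Y.
  have := hw i; rewrite le_eqVlt => /orP [/eqP <- | wi].
    by case: ifP => _; rewrite !scale0r addr0.
  case: (terms i wi) => [[-> ->] | [-> ->]]; first by rewrite eqxx scale0r addr0.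
  by rewrite nu' scale0r add0r.
set s := \sum_i (if a i == proj u then w i else 0).
have hs1 : \sum_i (if a i == proj u then 0 else w i) = 1 - s.
  rewrite -hw1 /s -sumrB; apply: eq_bigr => i _.
  by case: ifP => _; rewrite ?subr0 ?subrr.
exists s.
  rewrite sumr_ge0 /=; last by move=> i _; case: ifP.
  by rewrite -subr_ge0 -hs1 sumr_ge0 // => i _; case: ifP.
by rewrite hZe (eq_bigr _ (fun i _ => hsplit i)) big_split /= -!scaler_suml hs1.
Qed.
End ProductFace.

Definition midpoint_escapes m n (X Y : 'M[C]_(m * n)) : Prop :=
  exists Z Z' (t : C), [/\ separable Z, separable Z', 0 < t < 1,
    2^-1 *: X + (1 - 2^-1) *: Y = t *: Z + (1 - t) *: Z' &
    forall s, 0 <= s <= 1 -> Z <> s *: X + (1 - s) *: Y].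

Lemma midpoint_escapes_iso m n m' n' (Phi : 'M[C]_(m * n) -> 'M[C]_(m' * n'))
    (X Y : 'M[C]_(m * n)) :
  affine_iso_sep Phi -> separable X -> separable Y ->
  midpoint_escapes (Phi X) (Phi Y) <-> midpoint_escapes X Y.
Proof.
move=> [hsep [hinj [hsurj haff]]] hX hY; have hXY := separable_conv hX hY.
split=> [[Z1 [Z1' [t [hZ1 hZ1' ht hdec hoff]]]] | [Z [Z' [t [hZ hZ' ht hdec hoff]]]]].
- have [Z hZ eZ] := hsurj _ hZ1; have [Z' hZ' eZ'] := hsurj _ hZ1'.
  subst Z1 Z1'.
  have ht01 : 0 <= t <= 1 by case/andP: ht => t0 t1; rewrite !ltW.
  exists Z, Z', t; split => //.
  + apply: hinj; [exact: hXY half_in01 | exact: separable_conv |].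
    by rewrite (haff _ _ _ hX hY half_in01) hdec (haff _ _ _ hZ hZ' ht01).
  + by move=> s hs hZs; apply: (hoff s hs); rewrite hZs haff.
- have ht01 : 0 <= t <= 1 by case/andP: ht => t0 t1; rewrite !ltW.
  exists (Phi Z), (Phi Z'), t; split; try exact: hsep.
  + exact: ht.
  + by rewrite -(haff _ _ _ hX hY half_in01) -(haff _ _ _ hZ hZ' ht01) hdec.
  + move=> s hs hZs; apply: (hoff s hs); apply: hinj => //; first exact: hXY.
    by rewrite hZs haff.
Qed.

Lemma escapes_same_right m n (A A' : 'M[C]_m) (B : 'M[C]_n) :
  pure_state A -> pure_state A' -> A <> A' -> is_state B ->
  midpoint_escapes (kron A B) (kron A' B).
Proof.
move=> pA pA' nA hB.
have [u eA hu] := pure_rank1 pA; have [u' eA' hu'] := pure_rank1 pA'.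
rewrite eA eA' in nA *.
have [N [N' [t [hN hN' ht hdec hoff]]]] := pure_midpoint_split hu hu' nA.
exists (kron N B), (kron N' B), t; split; try exact: separable_kron.
- exact: ht.
- by rewrite -!kronZl -!kronDl hdec.
move=> s _ h; apply: (hoff s); apply: (@kron_injl _ _ _ _ B B); try by case: hB.
by rewrite h kronDl !kronZl.
Qed.

Lemma escapes_same_left m n (A : 'M[C]_m) (B B' : 'M[C]_n) :
  pure_state B -> pure_state B' -> B <> B' -> is_state A ->
  midpoint_escapes (kron A B) (kron A B').
Proof.
move=> pB pB' nB hA.
have [v eB hv] := pure_rank1 pB; have [v' eB' hv'] := pure_rank1 pB'.
rewrite eB eB' in nB *.
have [N [N' [t [hN hN' ht hdec hoff]]]] := pure_midpoint_split hv hv' nB.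
exists (kron A N), (kron A N'), t; split; try exact: separable_kron.
- exact: ht.
- by rewrite -!kronZr -!kronDr hdec.
move=> s _ h; apply: (hoff s); apply: (@kron_injr _ _ A A); try by case: hA.
by rewrite h kronDr !kronZr.
Qed.

(* Both factors distinct: the segment is a face, so the midpoint does not
   escape. *)
Lemma not_escapes_distinct m n (A A' : 'M[C]_m) (B B' : 'M[C]_n) :
  pure_state A -> pure_state A' -> A <> A' ->
  pure_state B -> pure_state B' -> B <> B' ->
  ~ midpoint_escapes (kron A B) (kron A' B').
Proof.
move=> pA pA' nA pB pB' nB.
have [u eA hu] := pure_rank1 pA; have [u' eA' hu'] := pure_rank1 pA'.
have [v eB hv] := pure_rank1 pB; have [v' eB' hv'] := pure_rank1 pB'.
rewrite eA eA' eB eB' in nA nB *.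
move=> [Z [Z' [t [hZ hZ' ht hdec hoff]]]].
have [s hs hZe] := product_segment_face hu hu' hv hv' nA nB hZ hZ' ht hdec.
exact: hoff hs hZe.
Qed.

Lemma escapes_product m n (A A' : 'M[C]_m) (B B' : 'M[C]_n) :
  pure_state A -> pure_state A' -> pure_state B -> pure_state B' ->
  kron A B <> kron A' B' ->
  midpoint_escapes (kron A B) (kron A' B') <-> A = A' \/ B = B'.
Proof.
move=> pA pA' pB pB' nAB; split.
  move=> hesc; have [eA|nA] := eqVneq A A'; first by left.
  have [eB|nB] := eqVneq B B'; first by right.
  by case: (not_escapes_distinct pA pA' (elimN eqP nA) pB pB' (elimN eqP nB)).
case=> [eA|eB].
  rewrite -eA in nAB *; apply: escapes_same_left pA.1 => // eB.
  by apply: nAB; rewrite eB.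
rewrite -eB in nAB *; apply: escapes_same_right pB.1 => // eA.
by apply: nAB; rewrite eA.
Qed.

Lemma iso_factor_coincidence m n m' n' (Phi : 'M[C]_(m * n) -> 'M[C]_(m' * n'))
    (a a' : 'M[C]_m) (b b' : 'M[C]_n) (r r' : 'M[C]_m') (t t' : 'M[C]_n') :
  affine_iso_sep Phi ->
  pure_state a -> pure_state a' -> pure_state b -> pure_state b' ->
  pure_state r -> pure_state r' -> pure_state t -> pure_state t' ->
  kron a b <> kron a' b' ->
  Phi (kron a b) = kron r t -> Phi (kron a' b') = kron r' t' ->
  (a = a' \/ b = b') <-> (r = r' \/ t = t').
Proof.
move=> hPhi pa pa' pb pb' pr pr' pt pt' nab e e'.
have sab := separable_kron pa.1 pb.1; have sab' := separable_kron pa'.1 pb'.1.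
have nrt : kron r t <> kron r' t'.
  by rewrite -e -e' => /(hPhi.2.1 _ _ sab sab').
rewrite -escapes_product // -escapes_product // -e -e'.
by rewrite midpoint_escapes_iso.
Qed.
End StateSpaces.

Unset Implicit Arguments.

Theorem mainTheorem7 (C : numClosedFieldType) (m n m' n' : nat)
    (Phi : 'M[C]_(m * n) -> 'M[C]_(m' * n'))
    (hPhi : affine_iso_sep Phi)
    (w1 w2 : 'M[C]_m) (s1 s2 : 'M[C]_n)
    (hw1 : pure_state w1) (hw2 : pure_state w2) (hw12 : w1 <> w2)
    (hs1 : pure_state s1) (hs2 : pure_state s2) (hs12 : s1 <> s2) :
  ~ exists (r1 r2 r3 : 'M[C]_m') (t1 t2 t3 : 'M[C]_n'),
      [/\ pure_state r1, pure_state r2 & pure_state r3] /\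
      [/\ pure_state t1, pure_state t2 & pure_state t3] /\
      [/\ Phi (kron w1 s1) = kron r1 t1,
          Phi (kron w1 s2) = kron r1 t2,
          Phi (kron w2 s1) = kron r2 t3 &
          Phi (kron w2 s2) = kron r3 t3].
Proof.
move=> [r1 [r2 [r3 [t1 [t2 [t3 [[pr1 pr2 pr3] [[pt1 pt2 pt3] [e1 e2 e3 e4]]]]]]]]].
have nw (b b' : 'M[C]_n) : is_state b -> is_state b' -> kron w1 b <> kron w2 b'.
  by move=> [_ hb] [_ hb'] /(kron_injl hb hb').
(* (w1s1, w2s1) share a factor, (w1s1, w2s2) and (w1s2, w2s1) do not *)
have c11 := iso_factor_coincidence hPhi hw1 hw2 hs1 hs1 pr1 pr2 pt1 pt3
  (nw _ _ hs1.1 hs1.1) e1 e3.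
have c12 := iso_factor_coincidence hPhi hw1 hw2 hs1 hs2 pr1 pr3 pt1 pt3
  (nw _ _ hs1.1 hs2.1) e1 e4.
have c21 := iso_factor_coincidence hPhi hw1 hw2 hs2 hs1 pr1 pr2 pt2 pt3
  (nw _ _ hs2.1 hs1.1) e2 e3.
have [er12|et13] : r1 = r2 \/ t1 = t3 by apply/c11; right.
- by have [/hw12|/esym/hs12] : w1 = w2 \/ s2 = s1 by apply/c21; left.
- by have [/hw12|/hs12] : w1 = w2 \/ s1 = s2 by apply/c12; right.
Qed.
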